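(* Let $(M,\varepsilon)$ be a local Lie group and $p\in M$. Then the complex $$T_p\xrightarrow{\widehat d(p)}T_p^*\otimes T_p\xrightarrow{\widehat d(p)}\Lambda^2(T_p^* )\otimes T_p\xrightarrow{\widehat d(p)}\cdots\xrightarrow{\widehat d(p)}\Lambda^n(T_p^* )\otimes T_p$$ is the complex computing the Chevalley–Eilenberg cohomology of the Lie algebra $\mathfrak g_p=(T_pM,[\cdot,\cdot]_p)$ with coefficients in its adjoint representation; that is, its cohomology is the deformation cohomology $H^*(\mathfrak g_p,\mathfrak g_p)$.
   Context: $M$ is a smooth manifold of dimension $n\ge2$. A splitting $\varepsilon$ assigns to each $(p,q)\in M\times M$ a linear isomorphism $\varepsilon(p,q):T_pM\to T_qM$, smooth in $(p,q)$, with $\varepsilon(q,r)\circ\varepsilon(p,q)=\varepsilon(p,r)$, $\varepsilon(p,p)=\mathrm{id}$. In coordinates $\varepsilon(p,q)=(\varepsilon^i_j(x,y))$; set $\Gamma^i_{kj}(x)=[\partial\varepsilon^i_j(x,y)/\partial y^k]_{y=x}$ (summation convention) and $T^i_{jk}=\Gamma^i_{jk}-\Gamma^i_{kj}$. $(M,\varepsilon)$ is a local Lie group if the system $\partial f^i(x)/\partial x^j=\varepsilon^i_j(x,f(x))$ is completely integrable; equivalently $\widehat{\mathfrak{R}}=0$ with $\widehat{\mathfrak{R}}^i_{rj,k}=\partial_r\Gamma^i_{kj}+\Gamma^a_{kr}\Gamma^i_{aj}-\partial_j\Gamma^i_{kr}-\Gamma^a_{kj}\Gamma^i_{ar}$.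 In that case $[u,v]_p^i=T^i_{ab}(p)u^av^b$ makes $T_pM$ a Lie algebra $\mathfrak g_p$ (isomorphic to the Lie algebra of $\varepsilon$-invariant vector fields). A tensor field $\xi$ is $\varepsilon$-invariant if $\varepsilon(p,q)_*\xi(p)=\xi(q)$ for all $p,q$; every $\sigma_p\in\Lambda^k(T_p^* )\otimes T_p$ extends uniquely to an $\varepsilon$-invariant section $\sigma$ of $\Lambda^k(T^*M)\otimes TM$. For a $TM$-valued $k$-form $\xi$, with $\widehat d_r\xi^i_{jl\dots m}=\partial_r\xi^i_{jl\dots m}-\Gamma^i_{ar}\xi^a_{jl\dots m}$, define $(\widehat d\xi)^i_{rjl\dots m}=\widehat d_r\xi^i_{jl\dots m}-\widehat d_j\xi^i_{rl\dots m}-\widehat d_l\xi^i_{jr\dots m}-\dots-\widehat d_m\xi^i_{jl\dots r}$ ($k=0$: $(\widehat d\xi)^i_r=\partial_r\xi^i-\Gamma^i_{ar}\xi^a$). The localization is $\widehat d(p)(\sigma_p)=(\widehat d\sigma)(p)$, where $\sigma$ is the $\varepsilon$-invariant extension of $\sigma_p$. *)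

(* Coordinate (chart) model of (M, eps). *)
From HB Require Import structures.
From mathcomp Require Import all_boot all_order all_algebra.
From mathcomp Require Import all_classical all_reals all_analysis.
Set Implicit Arguments. Unset Strict Implicit. Unset Printing Implicit Defensive.
Import Order.TTheory GRing.Theory Num.Theory.
Import numFieldNormedType.Exports.
Local Open Scope classical_set_scope.
Local Open Scope ring_scope.

Definition ev (R : realType) (n : nat) (k : 'I_n) : 'rV[R]_n := delta_mx 0 k.

Fixpoint Ck (R : realType) (V : normedModType R) (A : set V) (m : nat)
  (f : V -> R) : Prop :=
  match m with
  | 0 => forall x, A x -> {for x, continuous f}
  | m'.+1 => (forall x, A x -> differentiable f x) /\
             (forall v : V, Ck A m' (fun x => derive f x v))
  end.
Definition smooth_on (R : realType) (V : normedModType R) (A : set V)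
  (f : V -> R) : Prop := forall m, Ck A m f.

(* eps x y is the matrix (eps^i_j(x,y)) of eps(p,q) : T_p -> T_q, acting on
   column vectors of components: (eps(p,q) u)^i = sum_j eps^i_j u^j. *)
Definition is_splitting (R : realType) (n : nat) (U : set 'rV[R]_n)
  (eps : 'rV[R]_n -> 'rV[R]_n -> 'M[R]_n) : Prop :=
  [/\ (forall i j, smooth_on (U `*` U) (fun z : 'rV[R]_n * 'rV[R]_n => eps z.1 z.2 i j)),
      (forall x y, U x -> U y -> eps x y \in unitmx),
      (forall x y z, U x -> U y -> U z -> eps y z *m eps x y = eps x z) &
      (forall x, U x -> eps x x = 1%:M)].

(* complete integrability of  d f^i / d x^j = eps^i_j (x, f(x)):
   through every initial condition (x0, y0) passes a local solution *)
Definition local_lie_group (R : realType) (n : nat) (U : set 'rV[R]_n)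
  (eps : 'rV[R]_n -> 'rV[R]_n -> 'M[R]_n) : Prop :=
  forall x0 y0, U x0 -> U y0 ->
  exists (W : set 'rV[R]_n) (f : 'rV[R]_n -> 'rV[R]_n),
    [/\ open W, W x0, W `<=` U, f x0 = y0 &
        forall x, W x -> U (f x) /\
          forall i j : 'I_n,
            derivable (fun z => f z 0 i) x (ev R j) /\
            derive (fun z => f z 0 i) x (ev R j) = eps x (f x) i j].

Definition Gam (R : realType) (n : nat) (eps : 'rV[R]_n -> 'rV[R]_n -> 'M[R]_n)
  (x : 'rV[R]_n) (i k j : 'I_n) : R :=
  derive (fun y => eps x y i j) x (ev R k).

Definition Tor (R : realType) (n : nat) (eps : 'rV[R]_n -> 'rV[R]_n -> 'M[R]_n)
  (x : 'rV[R]_n) (i j k : 'I_n) : R := Gam eps x i j k - Gam eps x i k j.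

Definition brk (R : realType) (n : nat) (eps : 'rV[R]_n -> 'rV[R]_n -> 'M[R]_n)
  (p : 'rV[R]_n) (u v : 'I_n -> R) : 'I_n -> R :=
  fun i => \sum_(a < n) \sum_(b < n) Tor eps p i a b * u a * v b.

Definition evc (R : realType) (n : nat) (a : 'I_n) : 'I_n -> R :=
  fun b => (b == a)%:R.

(* A TM-valued k-form at a point (element of Lambda^k(T_p^* ) (x) T_p) is given
   by its components c i J = c^i_{j_1 ... j_k}, J = [:: j_1; ...; j_k]
   (only lists of size k matter); it must be alt_form. *)
Definition swap_at (n : nat) (d : 'I_n) (J : seq 'I_n) (a b : nat) : seq 'I_n :=
  set_nth d (set_nth d J a (nth d J b)) b (nth d J a).

Definition alt_form (R : realType) (n k : nat) (c : 'I_n -> seq 'I_n -> R) : Prop :=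
  forall (i : 'I_n) (J : seq 'I_n), size J = k ->
  forall a b : nat, (a < b < k)%N -> c i (swap_at i J a b) = - c i J.

(* eps-invariant extension of sigma_p : sigma(q) = eps(p,q)_* sigma_p, i.e.
   sigma(q)(v_1..v_k) = A sigma_p(A^{-1} v_1, ..., A^{-1} v_k), A = eps(p,q) *)
Definition inv_ext (R : realType) (n : nat) (eps : 'rV[R]_n -> 'rV[R]_n -> 'M[R]_n)
  (p : 'rV[R]_n) (k : nat) (c : 'I_n -> seq 'I_n -> R)
  (q : 'rV[R]_n) (i : 'I_n) (J : seq 'I_n) : R :=
  \sum_(a < n) eps p q i a *
    \sum_(B : {ffun 'I_k -> 'I_n})
       c a (codom B) * \prod_(t < k) invmx (eps p q) (B t) (nth i J t).

Definition dhat_r (R : realType) (n : nat) (eps : 'rV[R]_n -> 'rV[R]_n -> 'M[R]_n)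
  (p : 'rV[R]_n) (k : nat) (c : 'I_n -> seq 'I_n -> R)
  (r i : 'I_n) (J : seq 'I_n) : R :=
  derive (fun q => inv_ext eps p k c q i J) p (ev R r)
  - \sum_(a < n) Gam eps p i a r * inv_ext eps p k c p a J.

Definition dhat_loc (R : realType) (n : nat) (eps : 'rV[R]_n -> 'rV[R]_n -> 'M[R]_n)
  (p : 'rV[R]_n) (k : nat) (c : 'I_n -> seq 'I_n -> R)
  (i : 'I_n) (J' : seq 'I_n) : R :=
  let r := nth i J' 0 in
  let J := behead J' in
  dhat_r eps p k c r i J
  - \sum_(m < k) dhat_r eps p k c (nth i J m) i (set_nth i J m r).

Definition rem_at (T : Type) (m : nat) (s : seq T) : seq T :=
  take m s ++ drop m.+1 s.

(* Chevalley-Eilenberg differential of g_p with coefficients in the adjoint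
   representation, evaluated on basis vectors x_m = e_{J'_m}:
   (dc)(x_0..x_k) = sum_m (-1)^m [x_m, c(.. ^x_m ..)]
                  + sum_{m<l} (-1)^(m+l) c([x_m,x_l], .. ^x_m .. ^x_l ..)   *)
Definition CE_diff (R : realType) (n : nat) (eps : 'rV[R]_n -> 'rV[R]_n -> 'M[R]_n)
  (p : 'rV[R]_n) (k : nat) (c : 'I_n -> seq 'I_n -> R)
  (i : 'I_n) (J' : seq 'I_n) : R :=
  \sum_(m < k.+1) (-1) ^+ m *
     brk eps p (evc R (nth i J' m)) (fun b => c b (rem_at m J')) i
  + \sum_(m < k.+1) \sum_(l < k.+1 | (m < l)%N) (-1) ^+ (m + l) *
     \sum_(e < n) brk eps p (evc R (nth i J' m)) (evc R (nth i J' l)) e *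
        c i (e :: rem_at m (rem_at l J')).

(* By the cocycle identity
   eps(p,q)^-1 = eps(q,p), and differentiating eps(q,p) eps(p,q) = 1 at q = p shows
   that the first derivatives of eps(., p) are -Gamma. Hence, at p, the invariant
   extension of sigma_p has derivative Gamma in its value index and -Gamma in each
   form index, and hat-d_r sigma becomes T^i_{ra} sigma^a_J minus a sum of Gamma
   terms over the form indices. In the alternating sum defining hat-d, alternation of
   sigma pairs these Gamma terms up into torsion terms, and what remains is exactly
   the Chevalley-Eilenberg differential for the bracket T. *)

From HB Require Import structures.
From mathcomp Require Import all_boot all_order all_algebra.
From mathcomp Require Import all_classical all_reals all_analysis.
From mathcomp Require Import zify ring.
Import Order.TTheory GRing.Theory Num.Theory.
Import numFieldNormedType.Exports.
Set Implicit Arguments. Unset Strict Implicit.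

Section RemAt.
Variable T : Type.
Implicit Types s : seq T.

Lemma size_rem_at m s : (m < size s)%N -> size (rem_at m s) = (size s).-1.
Proof. by move=> ms; rewrite /rem_at size_cat size_take size_drop ms; lia. Qed.

Lemma nth_rem_at x0 m s j : (m < size s)%N ->
  nth x0 (rem_at m s) j = if (j < m)%N then nth x0 s j else nth x0 s j.+1.
Proof.
move=> ms; rewrite /rem_at nth_cat size_take ms.
case: ltnP => h; first by rewrite nth_take.
by rewrite nth_drop; congr nth; lia.
Qed.

End RemAt.

Section IndexSurgery.
Variable n : nat.
Implicit Types (d : 'I_n) (s J L P : seq 'I_n).

Lemma size_swap_at d s a b : (a < size s)%N -> (b < size s)%N ->
  size (swap_at d s a b) = size s.
Proof. by move=> ha hb; rewrite /swap_at !size_set_nth; lia. Qed.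

Lemma nth_swap_at d s a b j : (a < size s)%N -> (b < size s)%N -> a != b ->
  nth d (swap_at d s a b) j =
  if j == a then nth d s b else if j == b then nth d s a else nth d s j.
Proof.
move=> ha hb ab; rewrite /swap_at !nth_set_nth /=.
case: (eqVneq j b) => [->|jb]; first by rewrite eq_sym (negPf ab).
by rewrite nth_set_nth /=; case: (eqVneq j a).
Qed.

Lemma swap_at_catr d P L m : (m.+1 < size L)%N ->
  swap_at d (P ++ L) (size P + m) (size P + m.+1) = P ++ swap_at d L m m.+1.
Proof.
move=> hm; have hmL : (m < size L)%N by lia.
have hPL j : (size P + j < size (P ++ L))%N = (j < size L)%N.
  by rewrite size_cat ltn_add2l.
apply: (@eq_from_nth _ d) => [|j].
  by rewrite size_swap_at ?hPL // !size_cat size_swap_at.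
rewrite size_swap_at ?hPL // => hj.
rewrite nth_swap_at ?hPL //; last by apply/eqP; lia.
rewrite !nth_cat nth_swap_at //; last by apply/eqP; lia.
case: (ltnP j (size P)) => hjP.
  by have [-> ->] : (j == size P + m) = false /\ (j == size P + m.+1) = false
    by split; apply/eqP; lia.
have -> : (size P + m < size P)%N = false by lia.
have -> : (size P + m.+1 < size P)%N = false by lia.
have -> : (j == size P + m) = (j - size P == m) by apply/eqP/eqP; lia.
have -> : (j == size P + m.+1) = (j - size P == m.+1) by apply/eqP/eqP; lia.
by rewrite !addKn.
Qed.

Lemma nth_swap_at_succ d L m : (m.+1 < size L)%N ->
  nth d (swap_at d L m m.+1) m = nth d L m.+1.
Proof. by move=> hm; rewrite nth_swap_at ?eqxx //; [lia | apply/eqP; lia]. Qed.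

Lemma rem_at_swap_at_succ d L m : (m.+1 < size L)%N ->
  rem_at m (swap_at d L m m.+1) = rem_at m.+1 L.
Proof.
move=> hm; have hmL : (m < size L)%N by lia.
have hmm : m != m.+1 by apply/eqP; lia.
have hs := size_swap_at d hmL hm.
apply: (@eq_from_nth _ d) => [|j]; first by rewrite !size_rem_at ?hs.
rewrite size_rem_at ?hs // => hj.
rewrite (nth_rem_at _ _ (m:=m)) ?hs // (nth_rem_at _ _ (m:=m.+1)) //.
rewrite !nth_swap_at //.
case: (ltnP j m) => h1.
  by rewrite ltnW // ltn_eqF // ltn_eqF // ltnW.
case: (ltnP j m.+1) => h2.
  have -> : j = m by apply/eqP; rewrite eqn_leq h1 -ltnS h2.
  by rewrite eqxx gtn_eqF.
by rewrite gtn_eqF ?eqSS ?gtn_eqF // ltnW.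
Qed.

Lemma rem_at_set_nth d J m x : (m < size J)%N ->
  rem_at m (set_nth d J m x) = rem_at m J.
Proof.
move=> hm; have hs : size (set_nth d J m x) = size J.
  by rewrite size_set_nth; apply/maxn_idPr.
apply: (@eq_from_nth _ d) => [|j]; first by rewrite !size_rem_at ?hs.
rewrite size_rem_at ?hs // => hj.
rewrite !nth_rem_at ?hs // !nth_set_nth /=.
by case: ltnP => h1; [rewrite ltn_eqF | rewrite gtn_eqF].
Qed.

Lemma rem_at_set_nth_lt d J m t x : (m < t)%N -> (t < size J)%N ->
  rem_at t (set_nth d J m x) = set_nth d (rem_at t J) m x.
Proof.
move=> hmt ht; have hm : (m < size J)%N by apply: ltn_trans ht.
have hs : size (set_nth d J m x) = size J.
  by rewrite size_set_nth; apply/maxn_idPr.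
have hm' : (m < size (rem_at t J))%N by rewrite size_rem_at //; lia.
apply: (@eq_from_nth _ d) => [|j].
  by rewrite size_set_nth !size_rem_at ?hs //; lia.
rewrite size_rem_at ?hs // => hj.
rewrite nth_rem_at ?hs // !nth_set_nth /= nth_rem_at //.
case: ltnP => h1 //.
by have [-> ->] : (j.+1 == m) = false /\ (j == m) = false by split; apply/eqP; lia.
Qed.

Lemma set_nthC d J m t x y : m != t ->
  set_nth d (set_nth d J m x) t y = set_nth d (set_nth d J t y) m x.
Proof.
move=> hmt; apply: (@eq_from_nth _ d) => [|j _]; first by rewrite !size_set_nth maxnCA.
rewrite !nth_set_nth /=.
case: (eqVneq j t) => [jt|jt]; case: (eqVneq j m) => [jm|jm].
- by move: hmt; rewrite -jt -jm eqxx.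
- by rewrite nth_set_nth /= jt eqxx.
- by rewrite nth_set_nth /= jm eqxx.
- by rewrite !nth_set_nth /= (negPf jt) (negPf jm).
Qed.

End IndexSurgery.

Local Open Scope ring_scope.

Definition alternating (K : ringType) (n k : nat) (c : 'I_n -> seq 'I_n -> K) :=
  forall (i : 'I_n) (J : seq 'I_n), size J = k ->
  forall a b : nat, (a < b < k)%N -> c i (swap_at i J a b) = - c i J.

Section Alternating.
Variables (K : ringType) (n k : nat) (c : 'I_n -> seq 'I_n -> K).
Hypothesis alt : alternating k c.

Lemma alternating_move_front i m P L : size P + size L = k -> (m < size L)%N ->
  c i (P ++ L) = (-1) ^+ m * c i (P ++ nth i L m :: rem_at m L).
Proof.
elim: m P L => [|m IH] P L hk hm.
  by case: L hk hm => [|y L] //= _ _; rewrite expr0 mul1r /rem_at /= drop0.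
have hmL : (m < size L)%N by apply: ltnW.
have hs : size (P ++ L) = k by rewrite size_cat.
have := alt i hs (a := size P + m) (b := size P + m.+1).
rewrite swap_at_catr // ltn_add2l ltnSn -hk ltn_add2l hm => /(_ isT) E.
rewrite -[LHS]opprK -E (IH P (swap_at i L m m.+1)) ?size_swap_at //.
by rewrite nth_swap_at_succ // rem_at_swap_at_succ // exprS mulN1r mulNr.
Qed.

Lemma alternating_set_nth i d J m x : size J = k -> (m < k)%N ->
  c i (set_nth d J m x) = (-1) ^+ m * c i (x :: rem_at m J).
Proof.
move=> hJ hm; have hs : size (set_nth d J m x) = k by rewrite size_set_nth hJ; lia.
rewrite -[set_nth d J m x]cat0s (alternating_move_front _ (m := m)) ?hs //.
by rewrite (set_nth_default d) ?hs // nth_set_nth /= eqxx rem_at_set_nth // hJ.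
Qed.

Lemma alternating_set_nth2 i d J m t x y : size J = k -> (m < t)%N -> (t < k)%N ->
  c i (set_nth d (set_nth d J m x) t y) =
  (-1) ^+ (m + t) * c i (y :: x :: rem_at m (rem_at t J)).
Proof.
move=> hJ hmt ht.
have hs : size (set_nth d J m x) = k by rewrite size_set_nth hJ; lia.
rewrite alternating_set_nth // rem_at_set_nth_lt ?hJ //.
have hr : size (rem_at t J) = k.-1 by rewrite size_rem_at hJ.
rewrite -[y :: _]/([:: y] ++ _) (alternating_move_front _ (m := m)); first last.
- by rewrite size_set_nth hr; lia.
- by rewrite size_set_nth hr /=; lia.
rewrite (set_nth_default d); last by rewrite size_set_nth hr; lia.
rewrite nth_set_nth /= eqxx rem_at_set_nth; last by rewrite hr; lia.
by rewrite mulrA -exprD addnC.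
Qed.

Lemma alternating_set_nth2_gt i d J m t x y : size J = k -> (t < m)%N -> (m < k)%N ->
  c i (set_nth d (set_nth d J m x) t y) =
  - ((-1) ^+ (t + m) * c i (y :: x :: rem_at t (rem_at m J))).
Proof.
move=> hJ htm hm.
have hL : (size (rem_at t (rem_at m J))).+2 = k.
  by rewrite !size_rem_at ?size_rem_at ?hJ; lia.
rewrite set_nthC; last by apply/eqP; lia.
rewrite alternating_set_nth2 //.
have := alt i (J := y :: x :: rem_at t (rem_at m J)) hL (a := 0) (b := 1).
by rewrite -hL => /(_ isT) /= ->; rewrite mulrN.
Qed.

End Alternating.

Section DeltaSums.
Variables (K : comRingType) (n k : nat).
Implicit Types (F : {ffun 'I_k -> 'I_n} -> K) (f : 'I_k -> 'I_n).

Lemma prod_eq_ffun (B : {ffun 'I_k -> 'I_n}) f :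
  \prod_(s < k) ((B s == f s)%:R : K) = (B == [ffun s => f s])%:R.
Proof.
case: (pickP (fun s => B s != f s)) => [s Hs | H].
  rewrite (bigD1 s) //= (negPf Hs) mul0r.
  by case: eqP => // E; move: Hs; rewrite E ffunE eqxx.
have -> : B = [ffun s => f s].
  by apply/ffunP => s; rewrite ffunE; apply/eqP/negbFE/H.
by rewrite eqxx big1 // => s _; rewrite ffunE eqxx.
Qed.

Lemma sum_prod_delta F f :
  \sum_(B : {ffun 'I_k -> 'I_n}) F B * \prod_(s < k) ((B s == f s)%:R : K) =
  F [ffun s => f s].
Proof.
under eq_bigr => B _ do rewrite prod_eq_ffun.
rewrite (bigD1 [ffun s => f s]) //= eqxx mulr1 big1 ?addr0 //.
by move=> B /negPf ->; rewrite mulr0.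
Qed.

Lemma prod_delta_but (B : {ffun 'I_k -> 'I_n}) f t0 (H : 'I_n -> 'I_k -> K) :
  \prod_(s < k) (if s == t0 then H (B s) s else ((B s == f s)%:R : K)) =
  \sum_(b < n) H b t0 * \prod_(s < k)
     ((B s == (if s == t0 then b else f s))%:R : K).
Proof.
rewrite (bigD1 t0) //=; set P := \prod_(s < k | s != t0) _.
have Pb b : \prod_(s < k) ((B s == (if s == t0 then b else f s))%:R : K) =
    (B t0 == b)%:R * P.
  by rewrite (bigD1 t0) //= eqxx; congr (_ * _); apply: eq_bigr => s /negPf ->.
under eq_bigr => b _ do rewrite Pb mulrA.
rewrite -big_distrl /= eqxx (bigD1 (B t0)) //= eqxx mulr1 big1 ?addr0 //.
by move=> b /negPf; rewrite eq_sym => ->; rewrite mulr0.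
Qed.

Lemma sum_prod_delta_but F f t0 (H : 'I_n -> 'I_k -> K) :
  \sum_(B : {ffun 'I_k -> 'I_n}) F B *
    \prod_(s < k) (if s == t0 then H (B s) s else ((B s == f s)%:R : K)) =
  \sum_(b < n) H b t0 * F [ffun s => if s == t0 then b else f s].
Proof.
under eq_bigr => B _ do rewrite prod_delta_but big_distrr /=.
rewrite exchange_big /=; apply: eq_bigr => b _.
under eq_bigr => B _ do rewrite mulrCA.
by rewrite -big_distrr /= sum_prod_delta.
Qed.

Lemma codom_ffun_nth (g : 'I_k -> 'I_n) (J : seq 'I_n) d :
  size J = k -> (forall t : 'I_k, g t = nth d J t) -> codom [ffun t => g t] = J.
Proof.
move=> hJ hg; rewrite codomE.
apply: (@eq_from_nth _ d) => [|j]; first by rewrite size_map size_enum_ord.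
rewrite size_map size_enum_ord => hj.
by rewrite (nth_map (Ordinal hj)) ?size_enum_ord // ffunE hg nth_enum_ord.
Qed.

End DeltaSums.

Section CoordinateIdentity.
Variables (K : comRingType) (n k : nat) (G : 'I_n -> 'I_n -> 'I_n -> K)
  (c : 'I_n -> seq 'I_n -> K) (i : 'I_n).
Hypothesis alt : alternating k c.
Let T x y z := G x y z - G x z y.

Definition dhat_coord (r : 'I_n) (J : seq 'I_n) : K :=
  \sum_(a < n) T i r a * c a J
  - \sum_(t < k) \sum_(b < n) G b r (nth i J t) * c i (set_nth i J t b).

Lemma ce_bracket_terms x0 J : size J = k ->
  \sum_(m < k.+1) (-1) ^+ m *
     \sum_(b < n) T i (nth i (x0 :: J) m) b * c b (rem_at m (x0 :: J)) =
  \sum_(a < n) T i x0 a * c a J -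
  \sum_(m < k) \sum_(a < n) T i (nth i J m) a * c a (set_nth i J m x0).
Proof.
move=> hJ; rewrite big_ord_recl expr0 mul1r -sumrN; congr (_ + _).
  by rewrite /rem_at /= drop0.
apply: eq_bigr => m _; rewrite lift0 mulr_sumr -sumrN; apply: eq_bigr => a _.
by rewrite (alternating_set_nth alt) //= exprS; ring.
Qed.

Lemma sum_split_neq (F : 'I_k -> K) (m : 'I_k) :
  \sum_(t < k | t != m) F t =
  \sum_(t < k | (m < t)%N) F t + \sum_(t < k | (t < m)%N) F t.
Proof.
rewrite (bigID (fun t : 'I_k => (m < t)%N)) /=.
by congr (_ + _); apply: eq_bigl => t; rewrite -[t != m]/((t : nat) != m); lia.
Qed.

Lemma ce_structure_terms x0 J : size J = k ->
  \sum_(m < k.+1) \sum_(l < k.+1 | (m < l)%N) (-1) ^+ (m + l) *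
     \sum_(e < n) T e (nth i (x0 :: J) m) (nth i (x0 :: J) l) *
        c i (e :: rem_at m (rem_at l (x0 :: J))) =
  \sum_(m < k) (\sum_(b < n) G b (nth i J m) x0 * c i (set_nth i J m b)
  + \sum_(t < k | t != m) \sum_(b < n) G b (nth i J m) (nth i J t) *
      c i (set_nth i (set_nth i J m x0) t b))
  - \sum_(t < k) \sum_(b < n) G b x0 (nth i J t) * c i (set_nth i J t b).
Proof.
move=> hJ; rewrite big_ord_recl big_split /= addrAC; congr (_ + _).
  rewrite big_mkcond big_ord_recl /= add0r -sumrB.
  apply: eq_bigr => t _; rewrite /bump leq0n add0n mulr_sumr -sumrB.
  apply: eq_bigr => b _; rewrite (alternating_set_nth alt) //= /rem_at /= drop0.
  by rewrite /T exprS; ring.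
pose Y (m l : 'I_k) := (-1) ^+ (m + l) *
  \sum_(e < n) T e (nth i J m) (nth i J l) * c i (e :: x0 :: rem_at m (rem_at l J)).
transitivity (\sum_(m < k) \sum_(l < k | (m < l)%N) Y m l).
  apply: eq_bigr => m _; rewrite big_mkcond big_ord_recl /= add0r.
  rewrite [RHS]big_mkcond; apply: eq_bigr => l _.
  rewrite /bump !leq0n ltnS; case: ifP => // _.
  by rewrite /Y addSn addnS !exprS mulrA mulrNN !mul1r.
under eq_bigr => m _ do rewrite sum_split_neq.
rewrite big_split /= [X in _ = _ + X](exchange_big_dep xpredT) //= -big_split /=.
apply: eq_bigr => m _; rewrite -big_split /=; apply: eq_bigr => l hml.
rewrite /Y mulr_sumr -big_split /=; apply: eq_bigr => e _.
rewrite (alternating_set_nth2 alt) // (alternating_set_nth2_gt alt) //.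
by rewrite /T; ring.
Qed.

Lemma dhat_coord_alternating_sum x0 J : size J = k ->
  dhat_coord x0 J - \sum_(m < k) dhat_coord (nth i J m) (set_nth i J m x0) =
  \sum_(m < k.+1) (-1) ^+ m *
     \sum_(b < n) T i (nth i (x0 :: J) m) b * c b (rem_at m (x0 :: J))
  + \sum_(m < k.+1) \sum_(l < k.+1 | (m < l)%N) (-1) ^+ (m + l) *
     \sum_(e < n) T e (nth i (x0 :: J) m) (nth i (x0 :: J) l) *
        c i (e :: rem_at m (rem_at l (x0 :: J))).
Proof.
move=> hJ; rewrite ce_bracket_terms // ce_structure_terms //.
have split_diag (m : 'I_k) :
  \sum_(t < k) \sum_(b < n) G b (nth i J m) (nth i (set_nth i J m x0) t) *
      c i (set_nth i (set_nth i J m x0) t b) =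
  \sum_(b < n) G b (nth i J m) x0 * c i (set_nth i J m b)
  + \sum_(t < k | t != m) \sum_(b < n) G b (nth i J m) (nth i J t) *
      c i (set_nth i (set_nth i J m x0) t b).
  rewrite (bigD1 m) //=; congr (_ + _).
    by apply: eq_bigr => b _; rewrite nth_set_nth /= eqxx set_set_nth eqxx.
  apply: eq_bigr => t htm; apply: eq_bigr => b _.
  by rewrite nth_set_nth /= (negPf (htm : (t : nat) != m)).
rewrite -(eq_bigr _ (fun m _ => split_diag m)) /dhat_coord sumrB.
set A := \sum_(m < k) _; set B := \sum_(m < k) _; set C := \sum_(a < n) _.
set D := \sum_(t < k) _.
ring.
Qed.

End CoordinateIdentity.

Section ProductRule.
Variables (R : realType) (n : nat) (x v : 'rV[R]_n).

Lemma is_derive_mul (f g : 'rV[R]_n -> R) (df dg : R) :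
  is_derive x v f df -> is_derive x v g dg ->
  is_derive x v (fun y => f y * g y) (f x * dg + g x * df).
Proof. by move=> ? ?; apply: is_deriveM. Qed.

Lemma is_derive_cst_mul (a : R) (f : 'rV[R]_n -> R) (df : R) :
  is_derive x v f df -> is_derive x v (fun y => a * f y) (a * df).
Proof.
move=> hf; apply: is_derive_eq (is_derive_mul (is_derive_cst a x v) hf) _.
by rewrite mulr0 addr0.
Qed.

Lemma is_derive_big_sum (I : Type) (s : seq I) (h : I -> 'rV[R]_n -> R)
    (dh : I -> R) :
  (forall j, is_derive x v (h j) (dh j)) ->
  is_derive x v (fun y => \sum_(j <- s) h j y) (\sum_(j <- s) dh j).
Proof.
move=> hd; elim: s => [|a s IH].
  have -> : (fun y => \sum_(j <- [::]) h j y) = cst 0.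
    by apply: funext => y; rewrite big_nil.
  by rewrite big_nil; apply: is_derive_cst.
have -> : (fun y => \sum_(j <- a :: s) h j y) = h a + (fun y => \sum_(j <- s) h j y).
  by apply: funext => y; rewrite big_cons.
by rewrite big_cons; apply: is_deriveD.
Qed.

Lemma is_derive_big_prod k (h : 'I_k -> 'rV[R]_n -> R) (dh : 'I_k -> R) :
  (forall t, is_derive x v (h t) (dh t)) ->
  is_derive x v (fun y => \prod_(t < k) h t y)
    (\sum_(t < k) \prod_(s < k) (if s == t then dh s else h s x)).
Proof.
elim: k h dh => [|k IH] h dh hd.
  have -> : (fun y => \prod_(t < 0) h t y) = cst 1.
    by apply: funext => y; rewrite big_ord0.
  by rewrite big_ord0; apply: is_derive_cst.
have -> : (fun y => \prod_(t < k.+1) h t y) =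
    (fun y => h ord0 y * \prod_(t < k) h (lift ord0 t) y).
  by apply: funext => y; rewrite big_ord_recl.
apply: is_derive_eq (is_derive_mul (hd ord0) (IH _ _ (fun t => hd (lift ord0 t)))) _.
rewrite [RHS]big_ord_recl addrC; congr (_ + _).
  by rewrite big_ord_recl eqxx mulrC.
rewrite mulr_sumr; apply: eq_bigr => t _.
by rewrite big_ord_recl.
Qed.

End ProductRule.

Section SplittingAtPoint.
Variables (R : realType) (n : nat) (U : set 'rV[R]_n)
  (eps : 'rV[R]_n -> 'rV[R]_n -> 'M[R]_n) (p : 'rV[R]_n).
Hypotheses (oU : open U) (sU : is_splitting U eps) (Up : U p).

Lemma splitting_diag : eps p p = 1%:M.
Proof. by case: sU => _ _ _ ->. Qed.

Lemma near_domain : \forall q \near p, U q.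
Proof. exact: open_nbhs_nbhs (conj oU Up). Qed.

Lemma splitting_inv q : U q -> invmx (eps p q) = eps q p.
Proof.
case: sU => _ unit cocycle _ Uq.
rewrite -[RHS](mulmxK (unit p q Up Uq) (eps q p)).
by rewrite cocycle // splitting_diag mul1mx.
Qed.

Lemma differentiable_splitting_at a b :
  differentiable (fun z : 'rV[R]_n * 'rV[R]_n => eps z.1 z.2 a b) (p, p).
Proof. by case: sU => smooth _ _ _; have [d _] := smooth a b 1%N; apply: d. Qed.

Lemma is_derive_splitting_target a b v :
  is_derive p v (fun q => eps p q a b) ('D_v (fun q => eps p q a b) p).
Proof.
apply/derivableP/diff_derivable.
have -> : (fun q => eps p q a b) =
  (fun z : 'rV[R]_n * 'rV[R]_n => eps z.1 z.2 a b) \o (fun q => (p, q)) by [].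
apply: differentiable_comp (differentiable_splitting_at a b).
by apply: differentiable_pair; [exact: differentiable_cst | exact: ex_diff].
Qed.

Lemma is_derive_splitting_source a b v :
  is_derive p v (fun q => eps q p a b) ('D_v (fun q => eps q p a b) p).
Proof.
apply/derivableP/diff_derivable.
have -> : (fun q => eps q p a b) =
  (fun z : 'rV[R]_n * 'rV[R]_n => eps z.1 z.2 a b) \o (fun q => (q, p)) by [].
apply: differentiable_comp (differentiable_splitting_at a b).
by apply: differentiable_pair; [exact: ex_diff | exact: differentiable_cst].
Qed.

(* Differentiate the cocycle identity eps(q,p) eps(p,q) = 1 at q = p. *)
Lemma derive_splitting_source a b v :
  'D_v (fun q => eps q p a b) p = - 'D_v (fun q => eps p q a b) p.
Proof.
have cocycle : \forall q \near p,
    (fun=> (a == b)%:R) q = (fun q => \sum_(c < n) eps q p a c * eps p q c b) q.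
  near=> q; have Uq : U q by near: q; exact: near_domain.
  case: sU => _ _ co _; have := co p q p Up Uq Up.
  by rewrite splitting_diag => /matrixP /(_ a b); rewrite !mxE.
have := near_eq_derive v cocycle; rewrite derive_cst.
have D := is_derive_big_sum (index_enum 'I_n) (fun c =>
  is_derive_mul (is_derive_splitting_source a c v) (is_derive_splitting_target c b v)).
rewrite derive_val.
rewrite splitting_diag big_split /=.
under eq_bigr => c _ do rewrite mxE.
under [X in _ + X]eq_bigr => c _ do rewrite mxE.
rewrite (bigD1 a) //= eqxx mul1r big1 => [|c /negPf]; last by rewrite eq_sym => ->; rewrite mul0r.
rewrite (bigD1 b) //= eqxx mul1r big1 => [|c /negPf]; last by move=> ->; rewrite mul0r.
by rewrite !addr0 => /esym/eqP; rewrite addrC addr_eq0 => /eqP.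
Unshelve. all: by end_near. Qed.

Lemma sum_unit_mx_row (X : 'I_n -> R) a : \sum_(b < n) (1%:M : 'M[R]_n) a b * X b = X a.
Proof.
under eq_bigr => b _ do rewrite mxE.
rewrite (bigD1 a) //= eqxx mul1r big1 ?addr0 // => b /negPf.
by rewrite eq_sym => ->; rewrite mul0r.
Qed.

Variables (k : nat) (c : 'I_n -> seq 'I_n -> R) (i : 'I_n) (J : seq 'I_n).
Hypothesis hJ : size J = k.

Lemma sum_codom_unit_mx a d :
  \sum_(B : {ffun 'I_k -> 'I_n}) c a (codom B) *
     \prod_(t < k) (1%:M : 'M[R]_n) (B t) (nth d J t) = c a J.
Proof.
under eq_bigr => B _ do under eq_bigr => t _ do rewrite mxE.
by rewrite sum_prod_delta (codom_ffun_nth hJ (fun=> erefl)).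
Qed.

Lemma inv_ext_at_base a : inv_ext eps p k c p a J = c a J.
Proof.
rewrite /inv_ext splitting_diag invmx1.
by rewrite (sum_unit_mx_row (fun b => \sum_(B : {ffun 'I_k -> 'I_n}) _)) sum_codom_unit_mx.
Qed.

Lemma is_derive_prod_splitting_source (B : {ffun 'I_k -> 'I_n}) r :
  is_derive p (ev R r) (fun q => \prod_(t < k) eps q p (B t) (nth i J t))
    (\sum_(t < k) \prod_(s < k) (if s == t then - Gam eps p (B s) r (nth i J s)
       else ((B s == nth i J s)%:R : R))).
Proof.
apply: is_derive_eq (is_derive_big_prod (fun t => is_derive_splitting_source _ _ _)) _.
apply: eq_bigr => t _; apply: eq_bigr => s _.
by case: ifP => _; rewrite ?derive_splitting_source // splitting_diag mxE.
Qed.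

Lemma is_derive_frame_sum a r :
  is_derive p (ev R r)
    (fun q => \sum_(B : {ffun 'I_k -> 'I_n}) c a (codom B) *
       \prod_(t < k) eps q p (B t) (nth i J t))
    (- \sum_(t < k) \sum_(b < n) Gam eps p b r (nth i J t) * c a (set_nth i J t b)).
Proof.
apply: is_derive_eq (is_derive_big_sum (index_enum {ffun 'I_k -> 'I_n}) (fun B =>
  is_derive_cst_mul (c a (codom B)) (is_derive_prod_splitting_source B r))) _.
under eq_bigr => B _ do rewrite mulr_sumr.
rewrite exchange_big /= -sumrN; apply: eq_bigr => t _.
rewrite (sum_prod_delta_but _ _ _ (fun b s => - Gam eps p b r (nth i J s))).
rewrite -sumrN; apply: eq_bigr => b _; rewrite mulNr; congr (- (_ * _)).
have hs : size (set_nth i J t b) = k by rewrite size_set_nth hJ; have := ltn_ord t; lia.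
by rewrite (codom_ffun_nth (d := i) hs) // => s; rewrite nth_set_nth.
Qed.

Lemma derive_inv_ext r :
  'D_(ev R r) (fun q => inv_ext eps p k c q i J) p =
  \sum_(a < n) Gam eps p i r a * c a J
  - \sum_(t < k) \sum_(b < n) Gam eps p b r (nth i J t) * c i (set_nth i J t b).
Proof.
have near_inv : \forall q \near p, inv_ext eps p k c q i J =
    \sum_(a < n) eps p q i a * \sum_(B : {ffun 'I_k -> 'I_n}) c a (codom B) *
       \prod_(t < k) eps q p (B t) (nth i J t).
  near=> q; have Uq : U q by near: q; exact: near_domain.
  by rewrite /inv_ext splitting_inv.
rewrite (near_eq_derive _ near_inv).
have D := is_derive_big_sum (index_enum 'I_n)
  (fun a => is_derive_mul (is_derive_splitting_target i a (ev R r)) (is_derive_frame_sum a r)).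
rewrite derive_val big_split /= splitting_diag sum_unit_mx_row addrC.
congr (_ - _); apply: eq_bigr => a _.
by rewrite sum_codom_unit_mx mulrC.
Unshelve. all: by end_near. Qed.

Lemma dhat_r_at r : dhat_r eps p k c r i J = dhat_coord k (Gam eps p) c i r J.
Proof.
rewrite /dhat_r derive_inv_ext /dhat_coord.
under [X in _ - X = _]eq_bigr => a _ do rewrite inv_ext_at_base.
under [X in _ = X - _]eq_bigr => a _ do rewrite mulrBl.
by rewrite sumrB addrAC.
Qed.

End SplittingAtPoint.

Section BracketOnBasis.
Variables (R : realType) (n : nat) (eps : 'rV[R]_n -> 'rV[R]_n -> 'M[R]_n)
  (p : 'rV[R]_n).

Lemma brk_evcl x (w : 'I_n -> R) i :
  brk eps p (evc R x) w i = \sum_(b < n) Tor eps p i x b * w b.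
Proof.
rewrite /brk /evc (bigD1 x) //= [X in _ + X]big1 ?addr0.
  by apply: eq_bigr => b _; rewrite eqxx mulr1.
by move=> a /negPf ha; rewrite big1 // => b _; rewrite ha mulr0 mul0r.
Qed.

Lemma brk_evc x y e : brk eps p (evc R x) (evc R y) e = Tor eps p e x y.
Proof.
rewrite brk_evcl /evc (bigD1 y) //= eqxx mulr1 [X in _ + X]big1 ?addr0 //.
by move=> b /negPf ->; rewrite mulr0.
Qed.

End BracketOnBasis.

Theorem proposition9 (R : realType) (n : nat) (U : set 'rV[R]_n)
  (eps : 'rV[R]_n -> 'rV[R]_n -> 'M[R]_n) (p : 'rV[R]_n) :
  (2 <= n)%N -> open U -> is_splitting U eps -> local_lie_group U eps -> U p ->
  forall k : nat, (k < n)%N ->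
  forall c : 'I_n -> seq 'I_n -> R, alt_form k c ->
  forall (i : 'I_n) (J' : seq 'I_n), size J' = k.+1 ->
    dhat_loc eps p k c i J' = CE_diff eps p k c i J'.
Proof.
move=> _ oU sU _ Up k _ c alt i [//|x0 J] [hJ].
have hJm (m : 'I_k) : size (set_nth i J m x0) = k.
  by rewrite size_set_nth hJ; have := ltn_ord m; lia.
rewrite /dhat_loc /= (dhat_r_at oU sU Up _ _ hJ).
under eq_bigr => m _ do rewrite (dhat_r_at oU sU Up _ _ (hJm m)).
rewrite (dhat_coord_alternating_sum _ _ (alt : alternating k c) _ hJ) /CE_diff.
congr (_ + _); apply: eq_bigr => m _.
  by rewrite brk_evcl.
by apply: eq_bigr => l _; congr (_ * _); apply: eq_bigr => e _; rewrite brk_evc.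
Qed.
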